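(* Let $n\ge 1$ be an integer and let $U_{6n}=\langle a,b : a^{2n}=b^3=1,\ a^{-1}ba=b^{-1}\rangle$ (a group of order $6n$). Let $\Gamma_{U_{6n}}$ be its non-commuting graph. Then the spectrum of the distance signless Laplacian matrix $D^Q(\Gamma_{U_{6n}})$ (eigenvalues counted with multiplicity, multiplicities being added if two of the listed values coincide) consists of: (a) $6n-4$ with multiplicity $3(n-1)$; (b) $7n-4$ with multiplicity $2n+1$; (c) $8n-4$ with multiplicity $1$; (d) $13n-4$ with multiplicity $1$.
   Context: For a finite non-abelian group $G$ with centre $Z(G)$, the non-commuting graph $\Gamma_G$ is the simple undirected graph with vertex set $G\setminus Z(G)$, in which two distinct vertices $u,v$ are adjacent if and only if $uv\ne vu$. For a connected graph $H$, $d_{uv}$ denotes the length of a shortest path between $u$ and $v$; the distance matrix $D(H)$ has $(u,v)$-entry $d_{uv}$. The transmission of a vertex $v$ is $\sum_{u} d_{uv}$, and $Tr(H)$ is the diagonal matrix of vertex transmissions. The distance signless Laplacian matrix is $D^Q(H)=Tr(H)+D(H)$. *)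

From HB Require Import structures.
From mathcomp Require Import all_boot all_order all_algebra all_fingroup all_solvable.
Set Implicit Arguments. Unset Strict Implicit. Unset Printing Implicit Defensive.
Import GRing.Theory Num.Theory.

Section NonCommutingGraph.
Variable gT : finGroupType.
Variable G : {group gT}.

Definition ncg_vert : {set gT} := G :\: 'Z(G)%g.

(* Adjacency: distinct vertices u, v with uv <> vu (uv <> vu forces u <> v). *)
Definition ncg_adj : rel gT :=
  fun x y => [&& x \in ncg_vert, y \in ncg_vert & (x * y != y * x)%g].

Definition ncg_walk (k : nat) (u v : gT) : bool :=
  [exists t : k.-tuple gT, path ncg_adj u t && (last u t == v)].

(* Distance d_{uv}: least length of a walk from u to v (the graph is
   connected; the search range #|gT| bounds any shortest path). *)
Definition ncg_dist (u v : gT) : nat :=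
  find (fun k => ncg_walk k u v) (iota 0 #|gT|.+1).

Definition ncg_trans (u : gT) : nat := (\sum_(w in ncg_vert) ncg_dist u w)%N.

Variable R : nzRingType.
Local Open Scope ring_scope.

Definition ncg_vx (i : 'I_#|ncg_vert|) : gT := enum_val i.

Definition ncg_distmx : 'M[R]_#|ncg_vert| :=
  \matrix_(i, j) (ncg_dist (ncg_vx i) (ncg_vx j))%:R.
Definition ncg_transmx : 'M[R]_#|ncg_vert| :=
  diag_mx (\row_i (ncg_trans (ncg_vx i))%:R).
Definition ncg_distQ : 'M[R]_#|ncg_vert| := ncg_transmx + ncg_distmx.
End NonCommutingGraph.

From HB Require Import structures.
From mathcomp Require Import all_boot all_order all_algebra all_fingroup all_solvable.
From mathcomp Require Import ring zify.
Set Implicit Arguments. Unset Strict Implicit. Unset Printing Implicit Defensive.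
Import GRing.Theory Num.Theory.

(* The non-commuting graph of U_(6n) is the complete 4-partite graph K_(2n,n,n,n).
   In the normal form a^i b^j (i < 2n, j < 3), a^i b^j and a^k b^l commute iff
   j [k odd] = l [i odd] (mod 3); so Z(G) = <a^2>, and two non-central elements commute
   iff they lie in the same class, {a^i b^j | i even} or {a^i b^j | i odd} for a fixed j.
   Distances are thus 1 between classes and 2 within one, and D^Q = J + B + diag(t - 2),
   with B the all-ones matrix of each class and t the transmission (7n - 2 on the class
   of size 2n, 6n - 2 on the others). A zero-sum vector supported in one class is an
   eigenvector for t - 2, which gives 7n - 4 (2n - 1 times) and 6n - 4 (3(n - 1) times);
   the class-constant vectors carry the 4 x 4 quotient matrix, whose eigenvalues are
   13n - 4, 8n - 4, 7n - 4 and 7n - 4. Together these form an explicit eigenbasis. *)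

Section Diagonalizable.
Local Open Scope ring_scope.
Variables (R : idomainType) (N : nat).

Lemma char_poly_similar (A B P : 'M[R]_N) :
  P \in unitmx -> A *m P = P *m B -> char_poly A = char_poly B.
Proof.
move=> P_unit AP_PB; have detP_neq0 : (\det P)%:P != 0.
  by rewrite polyC_eq0; apply: contraTneq P_unit => det0; rewrite unitmxE det0 unitr0.
have char_mx_intertwine : char_poly_mx A *m map_mx polyC P =
                          map_mx polyC P *m char_poly_mx B.
  by rewrite /char_poly_mx mulmxBl mulmxBr -!map_mxM AP_PB scalar_mxC.
apply: (mulIf detP_neq0); rewrite -det_map_mx [RHS]mulrC /char_poly -!det_mulmx.
by rewrite char_mx_intertwine.
Qed.

Lemma char_poly_diagonalizable (A P : 'M[R]_N) (d : 'rV[R]_N) :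
  P \in unitmx -> A *m P = P *m diag_mx d -> char_poly A = \prod_i ('X - (d 0 i)%:P).
Proof.
move=> P_unit /(char_poly_similar P_unit) ->.
rewrite char_poly_trig ?diag_mx_is_trig //.
by apply: eq_bigr => i _; rewrite mxE eqxx mulr1n.
Qed.

End Diagonalizable.

Lemma sum_delta (R : nzSemiRingType) (I : finType) (F : I -> R) (v : I) :
  (\sum_w F w * (w == v)%:R = F v)%R.
Proof.
rewrite (eq_bigr (fun w => if w == v then F w else 0%R)) => [|w _]; last first.
  by rewrite mulr_natr mulrb.
by rewrite -big_mkcond big_pred1_eq.
Qed.

Section EquitablePartition.
Local Open Scope ring_scope.
Variables (R : numFieldType) (N k : nat) (f : 'I_N -> 'I_k) (r : 'I_k -> 'I_N).
Hypothesis f_r : cancel r f.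
Variable s : 'I_k -> nat.
Hypothesis card_class : forall l, #|[set i | f i == l]| = s l.
Variables (g : 'I_k -> 'I_k -> R) (c : 'I_k -> R).

(* Entry (l, m) is the sum over the class m of any row of the matrix [M] below
   indexed in the class l. *)
Definition class_quot : 'M[R]_k :=
  \matrix_(l, m) ((s m)%:R * g l m + (l == m)%:R * c l).

Variables (phi psi : 'M[R]_k) (lam : 'I_k -> R).
Hypotheses (psi_phi : psi *m phi = 1%:M)
  (quot_phi : class_quot *m phi = phi *m diag_mx (\row_l lam l)).

Lemma size_class_neq0 l : (s l)%:R != 0 :> R.
Proof.
by rewrite pnatr_eq0 -card_class -lt0n; apply/card_gt0P; exists (r l); rewrite inE f_r.
Qed.

Lemma sum_class (h : 'I_k -> R) : \sum_w h (f w) = \sum_l (s l)%:R * h l.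
Proof.
rewrite (partition_big f xpredT) //=; apply: eq_bigr => l _.
rewrite (eq_bigr (fun _ => h l)) => [|w /eqP -> //].
by rewrite sumr_const -card_class mulr_natl; congr (_ *+ _); apply: eq_card => w; rewrite inE.
Qed.

Lemma sum_in_class l (h : 'I_k -> R) :
  \sum_w (f w == l)%:R * h (f w) = (s l)%:R * h l.
Proof.
rewrite (sum_class (fun m => (m == l)%:R * h m)) (bigD1 l) //= eqxx mul1r.
by rewrite big1 ?addr0 // => m /negbTE m_l; rewrite m_l mul0r mulr0.
Qed.

(* The column of a class representative lifts an eigenvector of [class_quot]; any other
   column v is e_v - e_(r (f v)), on which the class-constant part of [M] vanishes. *)
Definition lift_evec : 'M[R]_N := \matrix_(w, v)
  (if v == r (f v) then phi (f w) (f v) else (w == v)%:R - (w == r (f v))%:R).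

Definition lift_evec_inv : 'M[R]_N := \matrix_(u, w)
  (if u == r (f u) then psi (f u) (f w) / (s (f w))%:R
   else (w == u)%:R - (f w == f u)%:R / (s (f u))%:R).

Definition lift_eval (i : 'I_N) : R := if i == r (f i) then lam (f i) else c (f i).

Let M := \matrix_(i, j) (g (f i) (f j) + (i == j)%:R * c (f i)) : 'M[R]_N.

Lemma lift_evecP : M *m lift_evec = lift_evec *m diag_mx (\row_i lift_eval i).
Proof.
apply/matrixP => u v; rewrite mul_mx_diag !mxE /lift_eval.
under eq_bigr => w _ do rewrite !mxE.
case: ifP => [_|not_rep].
  have /matrixP/(_ (f u) (f v)) := quot_phi.
  rewrite mul_mx_diag !mxE => <-.
  under eq_bigr => w _ do rewrite mulrDl (eq_sym u) [(_ == _)%:R * _]mulrC mulrAC.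
  rewrite big_split /= sum_delta (sum_class (fun l => g (f u) l * phi l (f v))).
  rewrite [RHS](eq_bigr (fun l => (s l)%:R * (g (f u) l * phi l (f v))
                                   + c (f u) * phi l (f v) * (l == f u)%:R)).
    by rewrite big_split /= sum_delta.
  by move=> l _; rewrite mxE (eq_sym (f u)); ring.
under eq_bigr => w _ do rewrite mulrBr.
rewrite sumrB !sum_delta f_r.
case: (eqVneq u v) => [-> | u_v]; first by rewrite not_rep; ring.
case: (eqVneq u (r (f v))) => [-> | _]; last by ring.
by rewrite f_r; ring.
Qed.

Lemma lift_evec_invK : lift_evec_inv *m lift_evec = 1%:M.
Proof.
apply/matrixP => u v; rewrite !mxE.
under eq_bigr => w _ do rewrite !mxE.
case: (boolP (u == r (f u))) => [u_rep | u_nrep];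
  case: (boolP (v == r (f v))) => [v_rep | v_nrep] /=.
- have -> : (u == v) = (f u == f v).
    by apply/eqP/eqP => [-> // | fu_fv]; rewrite (eqP u_rep) (eqP v_rep) fu_fv.
  rewrite (sum_class (fun l => psi (f u) l / (s l)%:R * phi l (f v))).
  have /matrixP/(_ (f u) (f v)) := psi_phi; rewrite !mxE => <-.
  by apply: eq_bigr => l _; field; apply: size_class_neq0.
- have -> : (u == v) = false by apply: contraNF v_nrep => /eqP <-.
  under eq_bigr => w _ do rewrite mulrBr.
  by rewrite sumrB !sum_delta f_r subrr.
- have -> : (u == v) = false by apply: contraNF u_nrep => /eqP ->.
  under eq_bigr => w _ do rewrite mulrBl [(w == u)%:R * _]mulrC mulrAC.
  rewrite sumrB sum_delta -mulr_suml (sum_in_class (f u) (fun l => phi l (f v))).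
  by rewrite mulrC mulKf ?size_class_neq0 ?subrr.
- under eq_bigr => w _ do rewrite mulrBr.
  rewrite sumrB !sum_delta f_r (eq_sym v u).
  have -> : (r (f v) == u) = false by apply: contraNF u_nrep => /eqP <-; rewrite f_r.
  by rewrite mulr0n sub0r opprK subrK.
Qed.

Lemma prod_class_eval l :
  \prod_(i | f i == l) ('X - (lift_eval i)%:P) =
  ('X - (lam l)%:P) * ('X - (c l)%:P) ^+ (s l).-1.
Proof.
rewrite (bigD1 (r l)) ?f_r //= /lift_eval f_r eqxx; congr (_ * _).
rewrite (eq_bigr (fun _ => 'X - (c l)%:P)) => [|i /andP [/eqP <- not_rep]]; last first.
  by rewrite (negbTE not_rep).
rewrite prodr_const -card_class (cardsD1 (r l)) inE f_r eqxx add1n /=.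
by congr (_ ^+ _); apply: eq_card => i; rewrite !inE andbC.
Qed.

Lemma char_poly_equitable :
  char_poly M = \prod_l (('X - (lam l)%:P) * ('X - (c l)%:P) ^+ (s l).-1).
Proof.
have [_ P_unit] := mulmx1_unit lift_evec_invK.
rewrite (char_poly_diagonalizable P_unit lift_evecP) (partition_big f xpredT) //=.
apply: eq_bigr => l _; rewrite -prod_class_eval.
by apply: eq_bigr => i _; rewrite mxE.
Qed.

End EquitablePartition.

Section NonCommutingWalks.
Variables (gT : finGroupType) (G : {group gT}).

Lemma ncg_walk0 x y : ncg_walk G 0 x y = (x == y).
Proof.
apply/existsP/eqP => [[t] | ->]; first by rewrite tuple0 /= => /eqP.
by exists [tuple]; rewrite /= eqxx.
Qed.

Lemma ncg_walk1 x y : ncg_walk G 1 x y = ncg_adj G x y.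
Proof.
apply/existsP/idP => [[t] | xy]; last by exists [tuple y]; rewrite /= xy eqxx.
by case: t => [[|z [|? ?]] //= _]; rewrite andbT => /andP [xz /eqP <-].
Qed.

Lemma ncg_walk2 x y z : ncg_adj G x z -> ncg_adj G z y -> ncg_walk G 2 x y.
Proof. by move=> xz zy; apply/existsP; exists [tuple z; y]; rewrite /= xz zy eqxx. Qed.

End NonCommutingWalks.

Section CompleteMultipartite.
Variables (gT : finGroupType) (G : {group gT}) (k : nat).
Variables (cls : gT -> 'I_k) (rep : 'I_k -> gT).
Hypotheses (k_gt1 : 1 < k) (rep_vert : forall l, rep l \in ncg_vert G)
  (cls_rep : cancel rep cls)
  (noncommute_cls : {in ncg_vert G &, forall x y, (x * y != y * x)%g = (cls x != cls y)}).

Local Notation V := (ncg_vert G).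

Lemma ncg_adj_cls : {in V &, forall x y, ncg_adj G x y = (cls x != cls y)}.
Proof. by move=> x y xV yV; rewrite /ncg_adj xV yV noncommute_cls. Qed.

Lemma ncg_dist_cls : {in V &, forall x y,
  ncg_dist G x y = if x == y then 0 else if cls x == cls y then 2 else 1}.
Proof.
move=> x y xV yV; pose l0 : 'I_k := Ordinal (ltnW k_gt1); pose l1 : 'I_k := Ordinal k_gt1.
have card_gT : 1 < #|gT|.
  apply/card_gt1P; exists (rep l0), (rep l1); split => //.
  by rewrite (can_eq cls_rep).
rewrite /ncg_dist -(subnKC card_gT) /= ncg_walk0 ncg_walk1 ncg_adj_cls //.
case: eqP => // _; case: eqP => //= cls_xy.
pose l := if cls x == l0 then l1 else l0.
have cls_x_l : cls x != l by rewrite /l; case: ifP => [/eqP -> | /negbT].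
rewrite (ncg_walk2 (z := rep l)) // ncg_adj_cls // cls_rep //.
by rewrite -cls_xy eq_sym.
Qed.

Definition cls_size l := #|[set x in V | cls x == l]|.

Lemma ncg_trans_cls x : x \in V -> ncg_trans G x = (#|V|.-1 + (cls_size (cls x)).-1)%N.
Proof.
move=> xV; rewrite /ncg_trans (bigD1 x) //= ncg_dist_cls // eqxx add0n.
rewrite (eq_bigr (fun w => 1 + (if cls w == cls x then 1 else 0)))%N; last first.
  by move=> w /andP [wV /negbTE w_x]; rewrite ncg_dist_cls // eq_sym w_x eq_sym; case: eqP.
rewrite big_split /= -big_mkcondr !sum1dep_card /cls_size.
have xC : x \in [set w in V | cls w == cls x] by rewrite inE xV eqxx.
rewrite (cardsD1 x V) (cardsD1 x [set w in V | cls w == cls x]) xC xV.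
rewrite !add1n /=; congr (_ + _); apply: eq_card => w; rewrite in_setD1 !in_set.
- by rewrite andbC.
- by rewrite andbCA andbA.
Qed.

Lemma card_ncg_vert_cls : #|V| = (\sum_l cls_size l)%N.
Proof.
rewrite -sum1_card (partition_big cls xpredT) //=.
by apply: eq_bigr => l _; rewrite sum1dep_card.
Qed.

Definition ncg_vx_cls (i : 'I_#|V|) : 'I_k := cls (ncg_vx i).

Definition ncg_vx_rep (l : 'I_k) : 'I_#|V| := enum_rank_in (rep_vert l) (rep l).

Lemma ncg_vx_repK : cancel ncg_vx_rep ncg_vx_cls.
Proof. by move=> l; rewrite /ncg_vx_cls /ncg_vx enum_rankK_in. Qed.

Lemma card_ncg_vx_cls l : #|[set i | ncg_vx_cls i == l]| = cls_size l.
Proof.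
rewrite /cls_size -(card_imset _ (@enum_val_inj _ (mem V))).
apply: eq_card => x; rewrite [RHS]inE.
apply/imsetP/andP => [[i] | [xV /eqP <-]].
  by rewrite inE => /eqP <- ->; split; [apply: enum_valP | rewrite /ncg_vx_cls].
by exists (enum_rank_in xV x); rewrite ?inE /ncg_vx_cls /ncg_vx enum_rankK_in.
Qed.

Local Open Scope ring_scope.

(* The transmission minus 2. *)
Definition cls_shift (R : nzRingType) (l : 'I_k) : R :=
  (#|V|.-1 + (cls_size l).-1)%N%:R - 2.

Lemma ncg_distQE (R : comNzRingType) : ncg_distQ G R =
  \matrix_(i, j) (1 + (ncg_vx_cls i == ncg_vx_cls j)%:R
                  + (i == j)%:R * cls_shift R (ncg_vx_cls i)).
Proof.
apply/matrixP => i j; rewrite /ncg_distQ /ncg_transmx /ncg_distmx !mxE /ncg_vx.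
rewrite ncg_dist_cls ?enum_valP // ncg_trans_cls ?enum_valP // (inj_eq enum_val_inj).
rewrite /cls_shift /ncg_vx_cls /ncg_vx.
case: (eqVneq i j) => [-> | _]; first by rewrite eqxx /=; ring.
by case: eqP => /= _; ring.
Qed.

Definition ncg_cls_quot (R : numFieldType) : 'M[R]_k :=
  class_quot cls_size (fun l m => 1 + (l == m)%:R) (cls_shift R).

Lemma char_poly_ncg_distQ (R : numFieldType) (phi psi : 'M[R]_k) (lam : 'I_k -> R) :
  psi *m phi = 1%:M -> ncg_cls_quot R *m phi = phi *m diag_mx (\row_l lam l) ->
  char_poly (ncg_distQ G R) =
    \prod_l (('X - (lam l)%:P) * ('X - (cls_shift R l)%:P) ^+ (cls_size l).-1).
Proof.
move=> psi_phi quot_phi; rewrite ncg_distQE.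
exact: (char_poly_equitable ncg_vx_repK card_ncg_vx_cls psi_phi quot_phi).
Qed.

End CompleteMultipartite.

Lemma card_odd_ord m : #|[set i : 'I_(2 * m) | odd i]| = m.
Proof.
rewrite -sum1dep_card -(big_mkord odd (fun=> 1)) big_mkcond /=.
elim: m => [|m IHm]; first by rewrite big_geq.
by rewrite mulnS add2n !big_nat_recr //= IHm oddM /= addn0 addn1.
Qed.

Lemma card_even_ord m : #|[set i : 'I_(2 * m) | ~~ odd i]| = m.
Proof.
have := cardsC [set i : 'I_(2 * m) | odd i]; rewrite card_odd_ord card_ord.
have -> : ~: [set i : 'I_(2 * m) | odd i] = [set i : 'I_(2 * m) | ~~ odd i].
  by apply/setP => i; rewrite !inE.
lia.
Qed.

Section QuotientEigenbasis.
Local Open Scope ring_scope.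
Variable R : numFieldType.

Definition U_evec : 'M[R]_4 := \matrix_(i, j)
  (nth [::] [:: [:: 3;  1;  0;  0];
                [:: 2; -1;  1;  1];
                [:: 2; -1; -1;  0];
                [:: 2; -1;  0; -1]] i)`_j.

Definition U_evec_adj : 'M[R]_4 := \matrix_(i, j)
  (nth [::] [:: [:: 3;  1;   1;   1];
                [:: 6; -3;  -3;  -3];
                [:: 0;  5; -10;   5];
                [:: 0;  5;   5; -10]] i)`_j.

Lemma U_evec_adjK : U_evec_adj *m U_evec = 15%:M.
Proof.
apply/matrixP => i j; rewrite !mxE !big_ord_recr big_ord0 /= !mxE.
by case: i j => [[|[|[|[|?]]]] ?] [[|[|[|[|?]]]] ?] //=; ring.
Qed.

Definition U_evec_inv : 'M[R]_4 := 15^-1 *: U_evec_adj.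

Lemma U_evec_invK : U_evec_inv *m U_evec = 1%:M.
Proof.
by rewrite -scalemxAl U_evec_adjK scale_scalar_mx mulVf // pnatr_eq0.
Qed.

Definition U_eval (n : nat) (l : 'I_4) : R :=
  (nth 0 [:: 13 * n - 4; 8 * n - 4; 7 * n - 4; 7 * n - 4] l)%N%:R.

End QuotientEigenbasis.

Section U6n.
Variables (gT : finGroupType) (G : {group gT}) (a b : gT) (n : nat).
Hypotheses (n_gt0 : 0 < n) (defG : G :=: <<[set a; b]>>%g)
  (a_order : (a ^+ (2 * n) = 1)%g) (b_order : (b ^+ 3 = 1)%g)
  (conj_b_a : (b ^ a = b^-1)%g) (card_G : #|G| = 6 * n).
Local Open Scope group_scope.

Lemma a_in_G : a \in G. Proof. by rewrite defG mem_gen // !inE eqxx. Qed.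
Lemma b_in_G : b \in G. Proof. by rewrite defG mem_gen // !inE eqxx orbT. Qed.

Lemma conjg_b_expa i : b ^ (a ^+ i) = b ^+ (1 + odd i).
Proof.
have b_inv : b^-1 = b ^+ 2 by rewrite -[b^-1]mul1g -b_order expgSr mulgK.
elim: i => [|i IHi]; first by rewrite conjg1.
rewrite expgSr conjgM IHi conjXg conj_b_a b_inv -expgM.
by rewrite /=; case: (odd i); rewrite // -[LHS](expg_mod _ b_order).
Qed.

Lemma mul_expab i j k l :
  (a ^+ i * b ^+ j) * (a ^+ k * b ^+ l) = a ^+ (i + k) * b ^+ (j * (1 + odd k) + l).
Proof.
rewrite -(mulgA (a ^+ i)) (mulgA (b ^+ j)) (conjgC (b ^+ j)) conjXg conjg_b_expa.
by rewrite -expgM mulnC !mulgA -expgD -mulgA -expgD.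
Qed.

Lemma two_n_gt1 : 1 < 2 * n. Proof. lia. Qed.

Definition nf (p : 'I_(2 * n) * 'I_3) : gT := a ^+ p.1 * b ^+ p.2.

Lemma nf_in_G p : nf p \in G.
Proof. by rewrite groupM ?groupX ?a_in_G ?b_in_G. Qed.

Lemma nf_onto x : x \in G -> exists p, x = nf p.
Proof.
have a_norm_b : <[a]> \subset 'N(<[b]>).
  by rewrite cycle_subG; apply/normP; rewrite -cycleJ conj_b_a cycleV.
have : G \subset <[a]> * <[b]>.
  rewrite -norm_joinEl // defG gen_subG; apply/subsetP => y.
  by rewrite !inE => /orP [] /eqP ->; rewrite mem_gen // inE cycle_id ?orbT.
move/subsetP => sub_G /sub_G /mulsgP [_ _ /cycleP [i ->] /cycleP [j ->] ->].
exists (Ordinal (ltn_pmod i (ltnW two_n_gt1)), Ordinal (ltn_pmod j (isT : 0 < 3))).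
by rewrite /nf /= (expg_mod _ a_order) (expg_mod _ b_order).
Qed.

Lemma nf_inj : injective nf.
Proof.
have im_nf : nf @: setT = G.
  apply/setP => x; apply/imsetP/idP => [[p _ ->] | /nf_onto [p ->]]; first exact: nf_in_G.
  by exists p.
have /imset_injP nf_inj_in : #|nf @: setT| == #|[set: 'I_(2 * n) * 'I_3]|.
  by rewrite im_nf card_G cardsT card_prod !card_ord; apply/eqP; lia.
by move=> p q; apply: nf_inj_in; rewrite inE.
Qed.

Lemma eq_expb i j : (b ^+ i == b ^+ j) = (i == j %[mod 3]).
Proof.
apply/eqP/eqP => [bi_bj | ij_mod3]; last first.
  by rewrite -(expg_mod i b_order) -(expg_mod j b_order) ij_mod3.
pose i0 : 'I_(2 * n) := Ordinal (ltnW two_n_gt1).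
pose nf_mod3 m := nf (i0, Ordinal (ltn_pmod m (isT : 0 < 3))).
have /nf_inj/(congr1 (fun p => val p.2)) // : nf_mod3 i = nf_mod3 j.
by rewrite /nf_mod3 /nf /= !(expg_mod _ b_order) bi_bj.
Qed.

Lemma commute_nf p q :
  (nf p * nf q == nf q * nf p) = (p.2 * odd q.1 == q.2 * odd p.1 %[mod 3]).
Proof.
rewrite !mul_expab addnC (inj_eq (mulgI _)) eq_expb !mulnDr !muln1.
by rewrite [p.2 + _]addnC [q.2 + _]addnC -!addnA [q.2 + p.2]addnC eqn_modDr.
Qed.

Definition nf_central (p : 'I_(2 * n) * 'I_3) := ~~ odd p.1 && (p.2 == 0 :> nat).

Lemma nf_center p : (nf p \in 'Z(G)) = nf_central p.
Proof.
rewrite /center inE nf_in_G /=.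
apply/centP/idP => [nf_p_central | /andP [p1_even /eqP p2_0] x].
  pose i0 : 'I_(2 * n) := Ordinal (ltnW two_n_gt1).
  pose i1 : 'I_(2 * n) := Ordinal two_n_gt1.
  have := nf_p_central _ (nf_in_G (i1, ord0)).
  have := nf_p_central _ (nf_in_G (i0, Ordinal (isT : 1 < 3))).
  rewrite /commute => /eqP; rewrite commute_nf /= muln0 mul1n => /eqP odd_p1.
  move/eqP; rewrite commute_nf /= muln1 mul0n => /eqP p2_0.
  rewrite /nf_central -(modn_small (ltn_ord p.2)) p2_0 andbT.
  by move: odd_p1; case: (odd p.1).
move=> /nf_onto [q ->]; apply/eqP; rewrite commute_nf p2_0 (negbTE p1_even).
by rewrite muln0 mul0n.
Qed.

Lemma nf_vert p : (nf p \in ncg_vert G) = ~~ nf_central p.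
Proof. by rewrite /ncg_vert in_setD nf_center nf_in_G andbT. Qed.

Definition nf_cls (p : 'I_(2 * n) * 'I_3) : 'I_4 := if odd p.1 then lift ord0 p.2 else ord0.

Lemma commute_nf_cls p q : ~~ nf_central p -> ~~ nf_central q ->
  (nf p * nf q != nf q * nf p) = (nf_cls p != nf_cls q).
Proof.
rewrite commute_nf /nf_cls /nf_central.
case: p q => [i [[|[|[|?]]] //= ?]] [k [[|[|[|?]]] //= ?]];
  by case: (odd i); case: (odd k).
Qed.

Definition U_cls (x : gT) : 'I_4 :=
  if [pick p | nf p == x] is Some p then nf_cls p else ord0.

Lemma U_cls_nf p : U_cls (nf p) = nf_cls p.
Proof. by rewrite /U_cls; case: pickP => [q /eqP/nf_inj -> | /(_ p)]; rewrite ?eqxx. Qed.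

Definition U_rep (l : 'I_4) : 'I_(2 * n) * 'I_3 :=
  if unlift ord0 l is Some j then (Ordinal two_n_gt1, j)
  else (Ordinal (ltnW two_n_gt1), Ordinal (isT : 1 < 3)).

Lemma U_rep_vert l : nf (U_rep l) \in ncg_vert G.
Proof. by rewrite nf_vert /U_rep; case: unliftP. Qed.

Lemma U_cls_rep : cancel (nf \o U_rep) U_cls.
Proof. by move=> l; rewrite /= U_cls_nf /U_rep /nf_cls; case: unliftP => [j ->|->]. Qed.

Lemma noncommute_U_cls :
  {in ncg_vert G &, forall x y, (x * y != y * x) = (U_cls x != U_cls y)}.
Proof.
move=> x y xV yV; have [[p defx] [q defy]] := (nf_onto (setDP xV).1, nf_onto (setDP yV).1).
move: xV yV; rewrite defx defy !nf_vert => p_nc q_nc.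
by rewrite commute_nf_cls ?U_cls_nf.
Qed.

Lemma card_nf_cls l :
  #|[set p | ~~ nf_central p & nf_cls p == l]| = (if l == ord0 then 2 * n else n)%N.
Proof.
rewrite /nf_central /nf_cls; case: (unliftP ord0 l) => [j -> | ->] /=.
- rewrite (eq_card (B := setX [set i : 'I_(2 * n) | odd i] [set j])).
    by rewrite cardsX card_odd_ord cards1 muln1.
  move=> [i j']; rewrite !inE /=; case: (odd i) => /=; first by rewrite (inj_eq lift_inj).
  by rewrite (negbTE (neq_lift _ _)) andbF.
- rewrite (eq_card (B := setX [set i : 'I_(2 * n) | ~~ odd i] [set~ ord0])).
    by rewrite cardsX card_even_ord cardsC1 card_ord mulnC.
  by move=> [i j']; rewrite !inE /=; case: (odd i); rewrite //= andbT.
Qed.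

Lemma U_cls_size l : cls_size G U_cls l = (if l == ord0 then 2 * n else n)%N.
Proof.
rewrite /cls_size -card_nf_cls -(card_imset _ nf_inj); apply: eq_card => x.
rewrite inE; apply/andP/imsetP => [[xV /eqP <-] | [p]].
  have [p defx] := nf_onto (setDP xV).1.
  by exists p; rewrite // inE -nf_vert -defx xV defx U_cls_nf eqxx.
by rewrite inE => /andP [p_nc /eqP <-] ->; rewrite nf_vert U_cls_nf.
Qed.

Lemma card_U_vert : #|ncg_vert G| = (5 * n)%N.
Proof.
by rewrite (card_ncg_vert_cls _ U_cls) !big_ord_recr big_ord0 /= !U_cls_size /=; lia.
Qed.

Local Open Scope ring_scope.
Variable R : numFieldType.

Lemma U_cls_shift l :
  cls_shift G U_cls R l = (if l == ord0 then 7 * n - 4 else 6 * n - 4)%N%:R.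
Proof.
rewrite /cls_shift card_U_vert U_cls_size; case: eqP => _.
- have -> : ((5 * n).-1 + (2 * n).-1 = 7 * n - 4 + 2)%N by lia.
  by rewrite natrD addrK.
- have -> : ((5 * n).-1 + n.-1 = 6 * n - 4 + 2)%N by lia.
  by rewrite natrD addrK.
Qed.

Lemma U_evecP :
  ncg_cls_quot G U_cls R *m U_evec R = U_evec R *m diag_mx (\row_l U_eval R n l).
Proof.
apply/matrixP => l m; rewrite mul_mx_diag /ncg_cls_quot /class_quot !mxE.
rewrite !big_ord_recr big_ord0 /= !mxE !U_cls_shift !U_cls_size.
case: l m => [[|[|[|[|?]]]] ?] [[|[|[|[|?]]]] ?] //=;
  rewrite /U_eval /= !natrB ?natrM; try lia; ring.
Qed.

Lemma char_poly_U_distQ : char_poly (ncg_distQ G R) =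
  \prod_(l < 4) (('X - (U_eval R n l)%:P)
     * ('X - ((if l == ord0 then 7 * n - 4 else 6 * n - 4)%N%:R)%:P)
       ^+ (if l == ord0 then 2 * n else n)%N.-1).
Proof.
rewrite (char_poly_ncg_distQ (isT : 1 < 4)%N U_rep_vert U_cls_rep noncommute_U_cls
           (U_evec_invK R) U_evecP).
by apply: eq_bigr => l _; rewrite U_cls_shift U_cls_size.
Qed.

End U6n.

Local Open Scope ring_scope.

Lemma U_spectrum_regroup (T : comNzRingType) (A B C D : T) (n : nat) : (0 < n)%N ->
  D * B ^+ (2 * n).-1 * (C * A ^+ n.-1) * (B * A ^+ n.-1) * (B * A ^+ n.-1) =
  A ^+ (3 * (n - 1)) * B ^+ (2 * n + 1) * C * D.
Proof.
move=> n_gt0; have -> : (3 * (n - 1) = n.-1 + n.-1 + n.-1)%N by lia.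
have -> : (2 * n + 1 = (2 * n).-1 + 2)%N by lia.
rewrite !exprD; ring.
Qed.

Theorem theorem5p3 (n : nat) (gT : finGroupType) (G : {group gT}) (a b : gT)
    (R : realFieldType) :
  (1 <= n)%N ->
  G :=: <<[set a; b]>>%g ->
  (a ^+ (2 * n) = 1)%g -> (b ^+ 3 = 1)%g -> (b ^ a = b^-1)%g ->
  #|G| = (6 * n)%N ->
  char_poly (ncg_distQ G R) =
    ('X - ((6 * n - 4)%N%:R)%:P) ^+ (3 * (n - 1))
    * ('X - ((7 * n - 4)%N%:R)%:P) ^+ (2 * n + 1)
    * ('X - ((8 * n - 4)%N%:R)%:P)
    * ('X - ((13 * n - 4)%N%:R)%:P).
Proof.
move=> n_gt0 defG a_order b_order conj_b_a card_G.
rewrite (char_poly_U_distQ n_gt0 defG a_order b_order conj_b_a card_G).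
rewrite !big_ord_recr big_ord0 /= mul1r.
exact: U_spectrum_regroup.
Qed.
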